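(* Let $P$ and $P_{\rm n}$ be two inverse demand functions, each continuous and strictly decreasing with a zero, each satisfying (A2) with the same $c$ and $\Theta$. Suppose that for all $q'<q$, $P(q)-P_{\rm n}(q)<P(q')-P_{\rm n}(q')$, and that $P_{\rm n}(P^{-1}(\underline\theta))=\underline\theta$. Let $\mathcal D(P)$ (resp. $\mathcal D(P_{\rm n})$) be the set of deterministic undominated mechanisms when the inverse demand function is $P$ (resp. $P_{\rm n}$). Then $\mathcal D(P_{\rm n})\subseteq\mathcal D(P)$.
   Context: Setting (for a given inverse demand function $P$). Let $\Theta=[\underline\theta,\overline\theta]$ with $0<\underline\theta<\overline\theta$. Let $c>0$ and let $P:\mathbb R_+\to\mathbb R_+$ be continuous and strictly decreasing with $P(\overline q)=0$ for some $\overline q>0$. Put $V(q)=\int_0^q P(z)\,dz$ and $\mathrm{TS}(\theta,q)=V(q)-c-\theta q$ for $q>0$, $\mathrm{TS}(\theta,0)=0$. Assume (A2): $\mathrm{TS}(\overline\theta,P^{-1}(\overline\theta))>0$. A mechanism is a triple $M=(r,q,u)$ of functions $r:\Theta\to[0,1]$, $q:\Theta\to\mathbb R_+$, $u:\Theta\to\mathbb R$ with $q(\theta)=0$ if and only if $r(\theta)=0$. It is IC if $u(\theta)\ge u(\theta')+(\theta'-\theta)q(\theta')r(\theta')$ for all $\theta,\theta'\in\Theta$, and IR if $u(\theta)\ge 0$ for all $\theta$. (Known fact: $M$ is IC iff $\theta\mapsto q(\theta)r(\theta)$ is nonincreasing and $u(\theta)=u(\overline\theta)+\int_\theta^{\overline\theta}q(z)r(z)\,dz$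 for all $\theta$; an IC mechanism is IR iff $u(\overline\theta)\ge0$.) A mechanism is deterministic if $r(\theta)\in\{0,1\}$ for all $\theta$. Fix $\alpha\in[0,1)$. The regulator's surplus at $\theta$ is $\mathrm{RS}_\alpha(\theta,M)=r(\theta)\,\mathrm{TS}(\theta,q(\theta))-(1-\alpha)u(\theta)$ (with $V$, $\mathrm{TS}$ computed from the relevant inverse demand function). An IC and IR mechanism $\tilde M$ dominates an IC and IR mechanism $M$ if $\mathrm{RS}_\alpha(\theta,\tilde M)\ge \mathrm{RS}_\alpha(\theta,M)$ for all $\theta\in\Theta$ with strict inequality for some $\theta$; $M$ is undominated if it is IC, IR and not dominated by any IC and IR mechanism. *)

From Stdlib Require Import Reals Lra.
From Coquelicot Require Import Coquelicot.
Open Scope R_scope.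

(* Inverse demand function: defined on R_+ (values at negative arguments are irrelevant). *)
Definition inverse_demand (P : R -> R) : Prop :=
  (forall x, 0 <= x -> filterlim P (within (fun y => 0 <= y) (locally x)) (locally (P x))) /\
  (forall x y, 0 <= x -> x < y -> P y < P x) /\
  (exists qbar, 0 < qbar /\ P qbar = 0).

Definition Vf (P : R -> R) (q : R) : R := RInt P 0 q.

Definition TS (P : R -> R) (c theta q : R) : R :=
  if Req_EM_T q 0 then 0 else Vf P q - c - theta * q.

Definition inTheta (tl th t : R) : Prop := tl <= t <= th.

(* (A2): TS(th, P^{-1}(th)) > 0, with P^{-1}(th) the q >= 0 such that P q = th *)
Definition A2 (P : R -> R) (c tl th : R) : Prop :=
  exists q, 0 <= q /\ P q = th /\ TS P c th q > 0.

Definition mechanism (tl th : R) (r q u : R -> R) : Prop :=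
  forall t, inTheta tl th t ->
    0 <= r t <= 1 /\ 0 <= q t /\ (q t = 0 <-> r t = 0).

Definition IC (tl th : R) (r q u : R -> R) : Prop :=
  forall t t', inTheta tl th t -> inTheta tl th t' ->
    u t >= u t' + (t' - t) * q t' * r t'.

Definition IR (tl th : R) (u : R -> R) : Prop :=
  forall t, inTheta tl th t -> u t >= 0.

Definition deterministic (tl th : R) (r : R -> R) : Prop :=
  forall t, inTheta tl th t -> r t = 0 \/ r t = 1.

Definition RS (P : R -> R) (c alpha t : R) (r q u : R -> R) : R :=
  r t * TS P c t (q t) - (1 - alpha) * u t.

Definition feasible (tl th : R) (r q u : R -> R) : Prop :=
  mechanism tl th r q u /\ IC tl th r q u /\ IR tl th u.

Definition dominates (P : R -> R) (c alpha tl th : R) (r' q' u' r q u : R -> R) : Prop :=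
  feasible tl th r' q' u' /\ feasible tl th r q u /\
  (forall t, inTheta tl th t -> RS P c alpha t r' q' u' >= RS P c alpha t r q u) /\
  (exists t, inTheta tl th t /\ RS P c alpha t r' q' u' > RS P c alpha t r q u).

Definition undominated (P : R -> R) (c alpha tl th : R) (r q u : R -> R) : Prop :=
  feasible tl th r q u /\
  ~ (exists r' q' u', dominates P c alpha tl th r' q' u' r q u).

Definition in_D (P : R -> R) (c alpha tl th : R) (r q u : R -> R) : Prop :=
  deterministic tl th r /\ undominated P c alpha tl th r q u.

(* Let [M = (r, q, u)] be deterministic and undominated under [Pn] and let [M'] dominate it
   under [P]. Undominatedness under [Pn] forces every served type [t] to get a quantity
   [q t <= q0 = P^{-1}(tl)] at a price [Pn (q t) >= t] with consumer surplus at least [c], and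
   the lowest type to get [q0]. Since [P - Pn] is decreasing and vanishes at [q0], these
   conditions also hold for [P], so [M] maximizes [P]-surplus among lotteries with no larger
   expected quantity. Hence [M'] can only gain where it allocates more, and IC then yields
   [u' <= u] everywhere. If at the type [ts] where [M'] gains strictly it allocates less or
   leaves less rent, the mechanism using the smaller of the two allocations with its least
   rent dominates [M] under [Pn], the loss [RInt (P - Pn)] being concave in the quantity.
   Otherwise [M'] allocates strictly more at [ts] with the same rent, which by IC puts the
   infimum of [M]'s allocation to the left of [ts] above its value at [ts], and serving that
   infimum at [ts] dominates [M] under [Pn]. *)

From Stdlib Require Import Reals Lra Lia List Classical_Prop.
From Coquelicot Require Import Coquelicot.
Open Scope R_scope.

Section NonincreasingIntegral.

Variable f : R -> R.
Hypothesis f_ex_RInt : forall a b, 0 <= a -> 0 <= b -> ex_RInt f a b.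
Hypothesis f_noninc : forall x y, 0 <= x -> x <= y -> f y <= f x.

Lemma RInt_0_sub a b : 0 <= a -> 0 <= b -> RInt f 0 b - RInt f 0 a = RInt f a b.
Proof.
  intros Ha Hb.
  rewrite <- (RInt_Chasles f 0 a b) by (apply f_ex_RInt; lra).
  change (plus (RInt f 0 a) (RInt f a b)) with (RInt f 0 a + RInt f a b). ring.
Qed.

Lemma RInt_noninc_bounds a b : 0 <= a <= b ->
  (b - a) * f b <= RInt f a b <= (b - a) * f a.
Proof.
  intros [Ha Hab]. rewrite <- !(RInt_const (V := R_CompleteNormedModule)).
  split; apply RInt_le; auto; try apply f_ex_RInt; try lra;
    try apply (ex_RInt_const (V := R_CompleteNormedModule));
    intros x Hx; apply f_noninc; lra.
Qed.

Lemma RInt_decr_bounds a b : (forall x y, 0 <= x -> x < y -> f y < f x) -> 0 <= a < b ->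
  (b - a) * f b < RInt f a b < (b - a) * f a.
Proof.
  intros f_decr [Ha Hab]. set (m := (a + b) / 2).
  assert (Hm : a < m < b) by (unfold m; lra).
  (* split at the midpoint, where both halves lose a strict amount *)
  pose proof (RInt_0_sub a m Ha ltac:(lra)).
  pose proof (RInt_0_sub m b ltac:(lra) ltac:(lra)).
  pose proof (RInt_0_sub a b Ha ltac:(lra)).
  pose proof (RInt_noninc_bounds a m ltac:(lra)).
  pose proof (RInt_noninc_bounds m b ltac:(lra)).
  pose proof (f_decr m b ltac:(lra) ltac:(lra)).
  pose proof (f_decr a m Ha ltac:(lra)).
  split; nra.
Qed.

Lemma RInt_0_scale_le x y rho : 0 <= x -> 0 <= f x -> 0 <= rho <= 1 -> 0 <= y -> rho * y <= x ->
  rho * RInt f 0 y <= RInt f 0 x.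
Proof.
  intros Hx Hfx Hrho Hy Hw. set (w := rho * y) in *.
  assert (Hw0 : 0 <= w) by (unfold w; nra).
  pose proof (RInt_0_sub w x Hw0 Hx).
  pose proof (RInt_noninc_bounds w x ltac:(lra)).
  pose proof (RInt_noninc_bounds 0 w ltac:(lra)).
  pose proof (f_noninc w x Hw0 Hw).
  assert (RInt f 0 w <= RInt f 0 x) by nra.
  (* concavity of the primitive [F]:
     rho F(y) <= rho F(w) + rho (y - w) f w = rho F(w) + (1 - rho) w f w <= F(w) *)
  destruct (Req_dec rho 0) as [->|Hr0]; [nra|].
  assert (w <= y) by (unfold w; nra).
  pose proof (RInt_0_sub w y Hw0 Hy).
  pose proof (RInt_noninc_bounds w y ltac:(lra)).
  assert (rho * RInt f 0 y <= rho * RInt f 0 w + rho * ((y - w) * f w)) by nra.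
  assert (rho * ((y - w) * f w) = (1 - rho) * ((w - 0) * f w)) by (unfold w; ring).
  nra.
Qed.

End NonincreasingIntegral.

Lemma Rmult_le_unit rho a b : 0 <= rho <= 1 -> a <= b -> 0 <= b -> rho * a <= b.
Proof. intros Hrho Hab Hb. destruct (Rle_lt_dec 0 a); nra. Qed.

Lemma stepwise_bound (g F : nat -> R) h n : 0 <= h -> g 0%nat <= 0 ->
  (forall j, (j <= n)%nat -> F j <= F 0%nat) ->
  (forall j, (j < n)%nat -> 0 < g (S j) -> g (S j) <= g j + h * (F j - F (S j))) ->
  forall j, (j <= n)%nat -> g j <= h * (F 0%nat - F j).
Proof.
  intros Hh Hg0 HF Hs. induction j as [|j IH]; intros Hj; [lra|].
  pose proof (IH ltac:(lia)). pose proof (HF (S j) Hj).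
  destruct (Rle_or_lt (g (S j)) 0) as [Hle|Hpos]; [nra|].
  pose proof (Hs j ltac:(lia) Hpos). nra.
Qed.

Lemma le_0_of_le_div_INR x K : 0 <= K -> (forall N, (0 < N)%nat -> x <= K / INR N) -> x <= 0.
Proof.
  intros HK HN. apply Rnot_lt_le. intros Hx.
  destruct (archimed_cor1 (x / (K + 1)) ltac:(apply Rdiv_lt_0_compat; lra)) as [N [HNx HN0]].
  pose proof (HN N HN0). pose proof (lt_0_INR N HN0).
  assert (K / INR N <= K * (x / (K + 1)))
    by (unfold Rdiv at 1; apply Rmult_le_compat_l; lra).
  assert (K * (x / (K + 1)) < x).
  { apply Rmult_lt_reg_r with (K + 1); [lra|]. field_simplify; lra. }
  lra.
Qed.

Lemma exists_inf_on (f : R -> R) a b m : a < b -> (forall t, a <= t < b -> m <= f t) ->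
  exists L, (forall t, a <= t < b -> L <= f t) /\ m <= L /\
    (forall d, 0 < d -> exists t, a <= t < b /\ f t < L + d).
Proof.
  intros Hab Hm. set (E := fun z => exists t, a <= t < b /\ z = f t).
  pose proof (Glb_Rbar_correct E) as [H1 H2].
  assert (Hlb : is_lb_Rbar E m) by (intros z [t [Ht ->]]; apply Hm; auto).
  assert (Hne : E (f a)) by (exists a; split; [lra|reflexivity]).
  destruct (Glb_Rbar E) as [L| |].
  - exists L. split; [|split].
    + intros t Ht. apply (H1 (f t)). exists t; auto.
    + exact (H2 _ Hlb).
    + intros d Hd. apply NNPP. intros Hn.
      assert (is_lb_Rbar E (L + d)).
      { intros z [t [Ht ->]]. simpl. apply Rnot_lt_le. intros Hlt. apply Hn. exists t; auto. }
      specialize (H2 _ H). simpl in H2. lra.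
  - exfalso. exact (H1 _ Hne).
  - exfalso. exact (H2 _ Hlb).
Qed.

Lemma le_of_forall_lt_mult A L b : 0 <= L -> 0 < b -> (forall e, 0 < e < b -> (b - e) * L <= A) ->
  b * L <= A.
Proof.
  intros HL Hb H. apply Rnot_lt_le. intros Hlt.
  set (e := Rmin (b / 2) ((b * L - A) / (2 * (L + 1)))).
  assert (He : 0 < e) by (apply Rmin_glb_lt; apply Rdiv_lt_0_compat; lra).
  pose proof (Rmin_l (b / 2) ((b * L - A) / (2 * (L + 1)))).
  pose proof (Rmin_r (b / 2) ((b * L - A) / (2 * (L + 1)))).
  fold e in H0, H1. specialize (H e ltac:(lra)).
  assert (e * L <= (b * L - A) / 2).
  { apply Rle_trans with ((b * L - A) / (2 * (L + 1)) * (L + 1)).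
    - apply Rmult_le_compat; lra.
    - right. field. lra. }
  lra.
Qed.

Section InverseDemand.

Variable Q : R -> R.
Hypothesis HQ : inverse_demand Q.

Lemma inverse_demand_near x eps : 0 <= x -> 0 < eps ->
  exists del, 0 < del /\ forall y, 0 <= y -> Rabs (y - x) < del -> Rabs (Q y - Q x) < eps.
Proof.
  intros Hx He. destruct HQ as [Hc _]. specialize (Hc x Hx).
  apply filterlim_locally with (eps := mkposreal eps He) in Hc.
  destruct Hc as [[d Hd] Hd']. exists d. split; [exact Hd|].
  intros y Hy Hyx. exact (Hd' y Hyx Hy).
Qed.

Lemma inverse_demand_decr x y : 0 <= x -> x < y -> Q y < Q x.
Proof. destruct HQ as [_ [Hd _]]. apply Hd. Qed.

Lemma inverse_demand_noninc x y : 0 <= x -> x <= y -> Q y <= Q x.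
Proof.
  intros Hx [Hxy|<-]; [left; apply inverse_demand_decr; auto|lra].
Qed.

Lemma inverse_demand_lt_left x t : 0 < x -> Q x < t -> exists z, 0 < z < x /\ Q z < t.
Proof.
  intros Hx Hlt.
  destruct (inverse_demand_near x (t - Q x) ltac:(lra) ltac:(lra)) as [d [Hd Hnear]].
  exists (x - Rmin d x / 2).
  assert (0 < Rmin d x <= d) by (split; [apply Rmin_glb_lt|apply Rmin_l]; lra).
  pose proof (Rmin_r d x). split; [lra|].
  assert (Rabs (Q (x - Rmin d x / 2) - Q x) < t - Q x).
  { apply Hnear; [lra|]. rewrite Rabs_left; lra. }
  apply Rabs_def2 in H1. lra.
Qed.

Lemma inverse_demand_ex_RInt a b : 0 <= a -> 0 <= b -> ex_RInt Q a b.
Proof.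
  intros Ha Hb.
  (* Q is only continuous within R_+, so integrate its extension by Q 0 to the left *)
  apply (ex_RInt_ext (fun y => Q (Rmax 0 y))).
  - intros x [Hx _]. rewrite Rmax_right; [reflexivity|].
    assert (0 <= Rmin a b) by (apply Rmin_glb; lra). lra.
  - apply (ex_RInt_continuous (V := R_CompleteNormedModule)). intros x _.
    apply filterlim_locally. intros eps.
    destruct (inverse_demand_near (Rmax 0 x) eps (Rmax_l _ _) (cond_pos eps)) as [d [Hd H]].
    exists (mkposreal d Hd). intros y Hy.
    unfold ball in *; simpl in *; unfold AbsRing_ball, abs, minus, plus, opp in *; simpl in *.
    apply H; [apply Rmax_l|].
    unfold Rmax; destruct (Rle_dec 0 y); destruct (Rle_dec 0 x); unfold Rabs in *;
      repeat destruct Rcase_abs; lra.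
Qed.

Lemma TS_0 c t : TS Q c t 0 = 0.
Proof. unfold TS. destruct (Req_EM_T 0 0); [reflexivity|congruence]. Qed.

Lemma TS_nonzero c t x : x <> 0 -> TS Q c t x = Vf Q x - c - t * x.
Proof. intros H. unfold TS. destruct (Req_EM_T x 0); [congruence|reflexivity]. Qed.

Lemma TS_increasing c t a b : 0 < a < b -> t <= Q b -> TS Q c t a < TS Q c t b.
Proof.
  intros Hab Hb. rewrite !TS_nonzero by lra. unfold Vf.
  pose proof (RInt_0_sub Q inverse_demand_ex_RInt a b ltac:(lra) ltac:(lra)).
  pose proof (RInt_decr_bounds Q inverse_demand_ex_RInt inverse_demand_noninc a b
    inverse_demand_decr ltac:(lra)). nra.
Qed.

Lemma TS_decreasing c t a b : 0 < a < b -> Q a <= t -> TS Q c t b < TS Q c t a.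
Proof.
  intros Hab Ha. rewrite !TS_nonzero by lra. unfold Vf.
  pose proof (RInt_0_sub Q inverse_demand_ex_RInt a b ltac:(lra) ltac:(lra)).
  pose proof (RInt_decr_bounds Q inverse_demand_ex_RInt inverse_demand_noninc a b
    inverse_demand_decr ltac:(lra)). nra.
Qed.

Lemma A2_lowest_type c tl th q0 : 0 < tl < th -> A2 Q c tl th -> 0 <= q0 -> Q q0 = tl ->
  0 < q0 /\ TS Q c tl q0 > 0.
Proof.
  intros Hth [qn [Hqn [HQn HTn]]] Hq0 HQ0.
  assert (Hqn0 : qn <> 0) by (intros ->; rewrite TS_0 in HTn; lra).
  assert (Hlt : qn < q0).
  { apply Rnot_le_lt. intros Hle. pose proof (inverse_demand_noninc q0 qn Hq0 Hle). lra. }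
  split; [lra|].
  pose proof (TS_increasing c tl qn q0 ltac:(lra) ltac:(lra)).
  rewrite TS_nonzero in HTn, H by auto. nra.
Qed.

Lemma surplus_ge_limit c L : 0 <= L ->
  (forall d, 0 < d -> exists z, L <= z < L + d /\ Vf Q z - z * Q z >= c) ->
  Vf Q L - L * Q L >= c.
Proof.
  intros HL Happrox. apply Rnot_lt_ge. intros Hlt.
  set (k := c - (Vf Q L - L * Q L)).
  destruct (inverse_demand_near L (k / (2 * (L + 1))) HL
    ltac:(apply Rdiv_lt_0_compat; unfold k; lra)) as [d [Hd Hnear]].
  destruct (Happrox (Rmin d 1) ltac:(apply Rmin_glb_lt; lra)) as [z [Hz Hcs]].
  pose proof (Rmin_l d 1). pose proof (Rmin_r d 1).
  assert (Habs : Rabs (Q z - Q L) < k / (2 * (L + 1)))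
    by (apply Hnear; [lra|rewrite Rabs_pos_eq; lra]).
  apply Rabs_def2 in Habs.
  pose proof (RInt_0_sub Q inverse_demand_ex_RInt L z HL ltac:(lra)).
  pose proof (RInt_noninc_bounds Q inverse_demand_ex_RInt inverse_demand_noninc L z ltac:(lra)).
  pose proof (inverse_demand_noninc L z HL ltac:(lra)).
  (* the surplus moves by at most [z (Q L - Q z)] between [L] and [z] *)
  assert (z * (Q L - Q z) <= (L + 1) * (k / (2 * (L + 1)))) by (apply Rmult_le_compat; lra).
  assert ((L + 1) * (k / (2 * (L + 1))) = k / 2) by (field; lra).
  unfold k, Vf in *. nra.
Qed.

Lemma TS_pos_served c tl th t L : A2 Q c tl th -> t <= th -> 0 < L -> t <= Q L ->
  Vf Q L - L * Q L >= c -> TS Q c t L > 0.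
Proof.
  intros [qn [Hqn [HQn HTn]]] Hth HL HQL Hcs.
  assert (Hqn0 : qn <> 0) by (intros ->; rewrite TS_0 in HTn; lra).
  rewrite TS_nonzero in HTn by auto.
  destruct (Rle_or_lt qn L) as [[Hlt|<-]|Hlt].
  - pose proof (TS_increasing c t qn L ltac:(lra) HQL).
    rewrite (TS_nonzero c t qn) in H by auto. nra.
  - rewrite TS_nonzero by auto. nra.
  - pose proof (inverse_demand_decr L qn ltac:(lra) Hlt).
    rewrite TS_nonzero by lra. unfold Vf in *. nra.
Qed.

(* [rho * TS y] is the surplus of the lottery selling [y] with probability [rho]. *)
Lemma TS_served_optimal c t x rho y : 0 < x -> Vf Q x - x * Q x >= c -> Q x >= t ->
  0 <= rho <= 1 -> 0 <= y -> (rho * y <= x \/ Q x = t) -> rho * TS Q c t y <= TS Q c t x.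
Proof.
  intros Hx HCS HQx Hrho Hy Hor.
  rewrite (TS_nonzero c t x) by lra. unfold Vf in *.
  assert (HT : RInt Q 0 x - c - t * x >= 0) by nra.
  destruct (Req_EM_T y 0) as [->|Hy0]; [rewrite TS_0; lra|].
  rewrite (TS_nonzero c t y Hy0). unfold Vf.
  pose proof (RInt_0_sub Q inverse_demand_ex_RInt x y ltac:(lra) Hy).
  destruct (Rle_lt_dec y x) as [Hyx|Hyx].
  - pose proof (RInt_0_sub Q inverse_demand_ex_RInt y x Hy ltac:(lra)).
    pose proof (RInt_noninc_bounds Q inverse_demand_ex_RInt inverse_demand_noninc y x ltac:(lra)).
    assert ((x - y) * t <= (x - y) * Q x) by (apply Rmult_le_compat_l; lra).
    apply Rmult_le_unit; lra.
  - pose proof (RInt_noninc_bounds Q inverse_demand_ex_RInt inverse_demand_noninc x y ltac:(lra)).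
    destruct Hor as [Hor|Hor].
    { assert (rho * RInt Q x y <= rho * ((y - x) * Q x)) by (apply Rmult_le_compat_l; lra).
      assert ((rho * y - x) * Q x <= (rho * y - x) * t) by (apply Rmult_le_compat_neg_l; lra).
      assert ((1 - rho) * (x * Q x) <= (1 - rho) * (RInt Q 0 x - c))
        by (apply Rmult_le_compat_l; lra).
      nra. }
    rewrite Hor in *. apply Rmult_le_unit; nra.
Qed.

(* Splitting a sale of [x] into the lottery "[y] with probability [x / y]" keeps the expected
   quantity and saves the fixed cost with probability [1 - x / y]. *)
Lemma TS_lottery_gain c t x : 0 < x -> Vf Q x - x * Q x < c ->
  exists y, x < y /\ x / y * TS Q c t y > TS Q c t x.
Proof.
  intros Hx Hlt. set (k := c - (Vf Q x - x * Q x)).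
  destruct (inverse_demand_near x (k / x) ltac:(lra) ltac:(apply Rdiv_lt_0_compat; unfold k; lra))
    as [d [Hd Hnear]].
  exists (x + d / 2). set (y := x + d / 2). split; [unfold y; lra|].
  assert (HQy : x * Q y > x * Q x - k).
  { assert (Rabs (Q y - Q x) < k / x)
      by (apply Hnear; unfold y; [lra|rewrite Rabs_pos_eq; lra]).
    apply Rabs_def2 in H as [_ H].
    assert (x * (k / x) = k) by (field; lra). nra. }
  rewrite !TS_nonzero by (unfold y; lra). unfold k, Vf in *.
  pose proof (RInt_0_sub Q inverse_demand_ex_RInt x y ltac:(lra) ltac:(unfold y; lra)).
  pose proof (RInt_noninc_bounds Q inverse_demand_ex_RInt inverse_demand_noninc x y
    ltac:(unfold y; lra)).
  assert (Hrho : 0 < x / y < 1).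
  { split; [apply Rdiv_lt_0_compat; unfold y; lra|].
    apply Rmult_lt_reg_r with y; [unfold y; lra|]. field_simplify; unfold y; lra. }
  assert (E : x / y * (RInt Q 0 y - c - t * y) =
              x / y * (RInt Q 0 y - c) - t * x) by (field; unfold y; lra).
  assert (E2 : x / y * (y - x) = (1 - x / y) * x) by (field; unfold y; lra).
  rewrite E.
  assert (x / y * RInt Q x y >= (1 - x / y) * (x * Q y)).
  { rewrite <- Rmult_assoc, <- E2, Rmult_assoc. apply Rmult_ge_compat_l; lra. }
  assert ((1 - x / y) * (x * Q y) > (1 - x / y) * (x * Q x - (c - (RInt Q 0 x - x * Q x))))
    by (apply Rmult_gt_compat_l; lra).
  assert (x / y * RInt Q 0 y = x / y * RInt Q 0 x + x / y * RInt Q x y).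
  { rewrite <- Rmult_plus_distr_l. f_equal. lra. }
  lra.
Qed.

End InverseDemand.

Section Mechanisms.

Variables tl th : R.

Lemma IC_diff r q u t t' : IC tl th r q u -> inTheta tl th t -> inTheta tl th t' ->
  u t - u t' >= (t' - t) * (q t' * r t').
Proof. intros H Ht Ht'. specialize (H t t' Ht Ht'). lra. Qed.

Lemma IC_alloc_noninc r q u t t' : IC tl th r q u -> tl <= t -> t <= t' -> t' <= th ->
  q t' * r t' <= q t * r t.
Proof.
  intros H Ht Htt' Ht'.
  destruct (Req_dec t t') as [->|Hne]; [lra|].
  pose proof (IC_diff r q u t t' H ltac:(split; lra) ltac:(split; lra)).
  pose proof (IC_diff r q u t' t H ltac:(split; lra) ltac:(split; lra)).
  assert (0 < t' - t) by lra. nra.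
Qed.

Lemma alloc_nonneg r q u t : mechanism tl th r q u -> inTheta tl th t -> 0 <= q t * r t.
Proof. intros H Ht. destruct (H t Ht) as [[? ?] [? ?]]. nra. Qed.

Lemma deterministic_cases r q u t : mechanism tl th r q u -> deterministic tl th r ->
  inTheta tl th t -> (r t = 1 /\ 0 < q t) \/ (r t = 0 /\ q t = 0).
Proof.
  intros Hm Hd Ht. destruct (Hm t Ht) as [_ [Hq Hiff]].
  destruct (Hd t Ht) as [H|H]; [right; split; auto; apply Hiff; auto|].
  left. split; auto. destruct Hq as [Hq|Hq]; auto. symmetry in Hq. apply Hiff in Hq. lra.
Qed.

Lemma IC_raise_to_inf r q u ts L : mechanism tl th r q u -> IC tl th r q u ->
  inTheta tl th ts -> 0 <= L ->
  q ts * r ts <= L -> (forall t, tl <= t < ts -> L <= q t * r t) ->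
  forall t, inTheta tl th t -> u t >= u ts + (ts - t) * L.
Proof.
  intros Hm Hic Hts HL HXts Hlb t Ht. pose proof Hts as [Hts1 Hts2]. pose proof Ht as [Ht1 Ht2].
  destruct (Rle_or_lt ts t) as [Hle|Hlt].
  - pose proof (IC_diff r q u t ts Hic Ht Hts).
    assert ((ts - t) * L <= (ts - t) * (q ts * r ts)) by (apply Rmult_le_compat_neg_l; lra).
    lra.
  - assert ((ts - t) * L <= u t - u ts); [|lra].
    apply le_of_forall_lt_mult; [lra|lra|]. intros e He.
    assert (Hs : inTheta tl th (ts - e)) by (split; lra).
    pose proof (IC_diff r q u t (ts - e) Hic Ht Hs).
    pose proof (IC_diff r q u (ts - e) ts Hic Hs Hts).
    pose proof (Hlb (ts - e) ltac:(lra)).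
    assert ((ts - e - t) * L <= (ts - e - t) * (q (ts - e) * r (ts - e)))
      by (apply Rmult_le_compat_l; lra).
    assert (0 <= (ts - (ts - e)) * (q ts * r ts))
      by (apply Rmult_le_pos; [lra|exact (alloc_nonneg r q u ts Hm Hts)]).
    lra.
Qed.

Definition update (f : R -> R) (t0 v : R) : R -> R :=
  fun t => if Req_EM_T t t0 then v else f t.

Lemma update_eq f t0 v : update f t0 v t0 = v.
Proof. unfold update. destruct (Req_EM_T t0 t0); congruence. Qed.

Lemma update_neq f t0 v t : t <> t0 -> update f t0 v t = f t.
Proof. unfold update. destruct (Req_EM_T t t0); congruence. Qed.

Lemma feasible_update r q u t0 rho y : feasible tl th r q u ->
  0 <= rho <= 1 -> 0 <= y -> (y = 0 <-> rho = 0) ->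
  (forall t, inTheta tl th t -> u t >= u t0 + (t0 - t) * y * rho) ->
  feasible tl th (update r t0 rho) (update q t0 y) u.
Proof.
  intros [Hm [Hic Hir]] Hrho Hy Hiff Hrow. split; [|split; [|exact Hir]].
  - intros t Ht. destruct (Req_dec t t0) as [->|Hne].
    + rewrite !update_eq. auto.
    + rewrite !update_neq by auto. apply Hm; auto.
  - intros t t' Ht Ht'. destruct (Req_dec t' t0) as [->|Hne].
    + rewrite !update_eq. auto.
    + rewrite !update_neq by auto. apply Hic; auto.
Qed.

Lemma undominated_no_gain Q c alpha r q u r' q' u' :
  undominated Q c alpha tl th r q u -> feasible tl th r' q' u' ->
  (forall t, inTheta tl th t -> RS Q c alpha t r' q' u' >= RS Q c alpha t r q u) ->
  forall t, inTheta tl th t -> RS Q c alpha t r' q' u' <= RS Q c alpha t r q u.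
Proof.
  intros [Hf Hn] Hf' Hge t Ht. apply Rnot_lt_le. intros Hlt.
  apply Hn. exists r', q', u'. split; [|split; [|split]]; auto. exists t. auto.
Qed.

Lemma undominated_update Q c alpha r q u t0 rho y :
  undominated Q c alpha tl th r q u -> inTheta tl th t0 ->
  0 <= rho <= 1 -> 0 <= y -> (y = 0 <-> rho = 0) ->
  (forall t, inTheta tl th t -> u t >= u t0 + (t0 - t) * y * rho) ->
  rho * TS Q c t0 y <= r t0 * TS Q c t0 (q t0).
Proof.
  intros Hu Ht0 Hrho Hy Hiff Hrow.
  pose proof (undominated_no_gain Q c alpha r q u _ _ _ Hu
    (feasible_update r q u t0 rho y (proj1 Hu) Hrho Hy Hiff Hrow)) as Hng.
  apply Rnot_lt_le. intros Hlt.
  assert (HRS : forall t, inTheta tl th t ->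
    RS Q c alpha t (update r t0 rho) (update q t0 y) u >= RS Q c alpha t r q u).
  { intros t Ht. unfold RS. destruct (Req_dec t t0) as [->|Hne].
    - rewrite !update_eq. lra.
    - rewrite !update_neq by auto. lra. }
  specialize (Hng HRS t0 Ht0). unfold RS in Hng. rewrite !update_eq in Hng. lra.
Qed.

Definition admissible_alloc (Y : R -> R) : Prop :=
  (forall x y, tl <= x -> x <= y -> y <= th -> Y y <= Y x) /\
  (forall x, tl <= x <= th -> 0 <= Y x).

Lemma alloc_admissible r q u : mechanism tl th r q u -> IC tl th r q u ->
  admissible_alloc (fun t => q t * r t).
Proof.
  intros Hm Hic. split.
  - intros a b Ha Hab Hb. exact (IC_alloc_noninc r q u a b Hic Ha Hab Hb).
  - intros a Ha. exact (alloc_nonneg r q u a Hm Ha).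
Qed.

Lemma admissible_alloc_min Y1 Y2 : admissible_alloc Y1 -> admissible_alloc Y2 ->
  admissible_alloc (fun t => Rmin (Y1 t) (Y2 t)).
Proof.
  intros [Hm1 Hn1] [Hm2 Hn2]. split.
  - intros a b Ha Hab Hb. pose proof (Hm1 a b Ha Hab Hb). pose proof (Hm2 a b Ha Hab Hb).
    unfold Rmin; repeat destruct Rle_dec; lra.
  - intros a Ha. pose proof (Hn1 a Ha). pose proof (Hn2 a Ha). unfold Rmin; destruct Rle_dec; lra.
Qed.

Definition cap_above (t0 z : R) (f : R -> R) (t : R) : R :=
  if Rle_dec t0 t then Rmin (f t) z else f t.

Lemma admissible_alloc_cap t0 z Y : 0 <= z -> admissible_alloc Y ->
  admissible_alloc (cap_above t0 z Y).
Proof.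
  intros Hz [Hm Hn]. unfold cap_above. split.
  - intros a b Ha Hab Hb. pose proof (Hm a b Ha Hab Hb).
    destruct (Rle_dec t0 a); destruct (Rle_dec t0 b); try lra;
      unfold Rmin; repeat destruct Rle_dec; lra.
  - intros a Ha. pose proof (Hn a Ha). destruct Rle_dec; [unfold Rmin; destruct Rle_dec|]; lra.
Qed.

Lemma deterministic_cap r q u t0 z : mechanism tl th r q u -> deterministic tl th r -> 0 < z ->
  mechanism tl th r (cap_above t0 z q) u /\
  forall t, inTheta tl th t -> cap_above t0 z q t * r t = cap_above t0 z (fun t => q t * r t) t.
Proof.
  intros Hm Hd Hz. unfold cap_above. split.
  - intros t Ht. destruct (Hm t Ht) as [Hr _]. split; [exact Hr|].
    destruct (deterministic_cases r q u t Hm Hd Ht) as [[-> Hq]|[-> ->]];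
      destruct Rle_dec; unfold Rmin; repeat destruct Rle_dec; split; try lra; split; intros; lra.
  - intros t Ht. destruct Rle_dec; [|reflexivity].
    destruct (deterministic_cases r q u t Hm Hd Ht) as [[-> _]|[-> ->]].
    + rewrite !Rmult_1_r. reflexivity.
    + rewrite Rmult_0_r, Rmin_left by lra. ring.
Qed.

(* For [t <= s_1 <= ... <= s_n <= th], [lower_sum Y t [s_1; ...; s_n]] is the right-endpoint
   Riemann sum of [Y] over that partition of [[t, th]]: a lower sum, as [Y] is nonincreasing.
   Their supremum, the integral of [Y] over [[t, th]], is the least information rent
   implementing the allocation [Y]. *)
Fixpoint lower_sum (Y : R -> R) (t : R) (l : list R) : R :=
  match l with
  | nil => (th - t) * Y th
  | s :: l' => (s - t) * Y s + lower_sum Y s l'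
  end.

Fixpoint ascending (t : R) (l : list R) : Prop :=
  match l with
  | nil => t <= th
  | s :: l' => t <= s /\ ascending s l'
  end.

Lemma ascending_le t l : ascending t l -> t <= th.
Proof.
  revert t; induction l as [|s l IH]; simpl; intros t H; [lra|].
  destruct H as [H1 H2]. apply IH in H2. lra.
Qed.

Section LowerSums.

Variable Y : R -> R.
Hypothesis HY : admissible_alloc Y.

Lemma lower_sum_nonneg l t : tl <= t -> ascending t l -> 0 <= lower_sum Y t l.
Proof.
  destruct HY as [_ Hn]. revert t.
  induction l as [|s l IH]; simpl; intros t Ht H.
  - apply Rmult_le_pos; [lra|apply Hn; lra].
  - destruct H as [H1 H2]. pose proof (ascending_le _ _ H2).
    pose proof (IH s ltac:(lra) H2). pose proof (Hn s ltac:(lra)). nra.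
Qed.

Lemma lower_sum_le l t : tl <= t -> ascending t l -> lower_sum Y t l <= (th - t) * Y t.
Proof.
  destruct HY as [Hm Hn]. revert t.
  induction l as [|s l IH]; simpl; intros t Ht H.
  - pose proof (Hm t th Ht H ltac:(lra)). nra.
  - destruct H as [H1 H2]. pose proof (ascending_le _ _ H2).
    pose proof (IH s ltac:(lra) H2). pose proof (Hm t s Ht H1 ltac:(lra)).
    pose proof (Hn s ltac:(lra)). nra.
Qed.

Lemma lower_sum_restrict l t t' : tl <= t -> t <= t' -> t' <= th -> ascending t l ->
  exists l', ascending t' l' /\ lower_sum Y t l <= (t' - t) * Y t + lower_sum Y t' l'.
Proof.
  destruct HY as [Hm Hn]. revert t.
  induction l as [|s l IH]; simpl; intros t Ht Htt' Ht' H.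
  - exists nil. simpl. split; [lra|]. pose proof (Hm t th Ht ltac:(lra) ltac:(lra)). nra.
  - destruct H as [H1 H2]. pose proof (ascending_le _ _ H2).
    pose proof (Hm t s Ht H1 ltac:(lra)). pose proof (Hn s ltac:(lra)).
    destruct (Rle_lt_dec s t') as [Hst|Hst].
    + destruct (IH s ltac:(lra) Hst Ht' H2) as [l' [Hl' Hc]].
      exists l'. split; auto. nra.
    + exists (s :: l). simpl. split; [split; [lra|auto]|]. nra.
Qed.

Lemma lower_sum_le_IC (X u : R -> R) l t :
  (forall a b, tl <= a -> a <= b -> b <= th -> u a - u b >= (b - a) * X b) ->
  (forall x, tl <= x <= th -> Y x <= X x) ->
  tl <= t -> ascending t l -> lower_sum Y t l <= u t - u th.
Proof.
  intros HIC HYX. revert t.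
  induction l as [|s l IH]; simpl; intros t Ht H.
  - pose proof (HIC t th Ht H ltac:(lra)). pose proof (HYX th ltac:(lra)). nra.
  - destruct H as [H1 H2]. pose proof (ascending_le _ _ H2).
    pose proof (IH s ltac:(lra) H2). pose proof (HIC t s Ht H1 ltac:(lra)).
    pose proof (HYX s ltac:(lra)). nra.
Qed.

End LowerSums.

Definition rent (Y : R -> R) (c0 t : R) : R :=
  c0 + real (Lub_Rbar (fun z => exists l, ascending t l /\ z = lower_sum Y t l)).

Section Rent.

Variable Y : R -> R.
Hypothesis HY : admissible_alloc Y.

Lemma rent_sup c0 t : tl <= t <= th ->
  (forall l, ascending t l -> c0 + lower_sum Y t l <= rent Y c0 t) /\
  (forall b, (forall l, ascending t l -> c0 + lower_sum Y t l <= b) -> rent Y c0 t <= b).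
Proof.
  intros Ht. unfold rent.
  set (E := fun z => exists l, ascending t l /\ z = lower_sum Y t l).
  pose proof (Lub_Rbar_correct E) as [H1 H2].
  assert (Hne : E (lower_sum Y t nil)) by (exists nil; simpl; split; [lra|reflexivity]).
  assert (Hb : is_ub_Rbar E ((th - t) * Y t)).
  { intros z [l [Hl ->]]. apply (lower_sum_le Y HY l t); lra || auto. }
  destruct (Lub_Rbar E) as [s| |]; simpl.
  - split.
    + intros l Hl. assert (lower_sum Y t l <= s) by (apply (H1 (lower_sum Y t l)); exists l; auto).
      lra.
    + intros b Hbb. assert (s <= b - c0); [|lra].
      apply (H2 (Finite (b - c0))). intros z [l [Hl ->]]. simpl. specialize (Hbb l Hl). lra.
  - exfalso. exact (H2 _ Hb).
  - exfalso. exact (H1 _ Hne).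
Qed.

Lemma rent_IC c0 t t' : tl <= t <= th -> tl <= t' <= th ->
  rent Y c0 t >= rent Y c0 t' + (t' - t) * Y t'.
Proof.
  intros Ht Ht'.
  destruct (rent_sup c0 t Ht) as [A1 _]. destruct (rent_sup c0 t' Ht') as [_ B2].
  destruct (Rle_lt_dec t t') as [Hle|Hlt].
  - assert (rent Y c0 t' <= rent Y c0 t - (t' - t) * Y t'); [|lra].
    apply B2. intros l Hl. specialize (A1 (t' :: l) (conj Hle Hl)). simpl in A1. lra.
  - assert (rent Y c0 t' <= (t - t') * Y t' + rent Y c0 t); [|lra].
    apply B2. intros l Hl.
    destruct (lower_sum_restrict Y HY l t' t ltac:(lra) ltac:(lra) ltac:(lra) Hl)
      as [l' [Hl' Hc]].
    specialize (A1 l' Hl'). lra.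
Qed.

Lemma rent_ge c0 t : tl <= t <= th -> rent Y c0 t >= c0.
Proof.
  intros Ht. destruct (rent_sup c0 t Ht) as [A1 _].
  specialize (A1 nil ltac:(simpl; lra)).
  pose proof (lower_sum_nonneg Y HY nil t ltac:(lra) ltac:(simpl; lra)). lra.
Qed.

Lemma rent_le_IC r q u c0 t : IC tl th r q u ->
  (forall x, tl <= x <= th -> Y x <= q x * r x) ->
  tl <= t <= th -> rent Y c0 t <= c0 + u t - u th.
Proof.
  intros Hic HYX Ht. destruct (rent_sup c0 t Ht) as [_ A2].
  apply A2. intros l Hl.
  assert (lower_sum Y t l <= u t - u th); [|lra].
  apply (lower_sum_le_IC Y (fun x => q x * r x) u l t); try lra; auto.
  intros a b Ha Hab Hb. apply (IC_diff r q u a b Hic); split; lra.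
Qed.

Lemma feasible_rent r q u c0 : mechanism tl th r q u ->
  (forall t, inTheta tl th t -> q t * r t = Y t) -> 0 <= c0 ->
  feasible tl th r q (rent Y c0).
Proof.
  intros Hm HqY Hc0. split; [exact Hm|split].
  - intros t t' Ht Ht'. pose proof (rent_IC c0 t t' Ht Ht'). rewrite <- (HqY t' Ht') in H. lra.
  - intros t Ht. pose proof (rent_ge c0 t Ht). lra.
Qed.

End Rent.

End Mechanisms.

Section UndominatedDeterministic.

Variables (Q : R -> R) (c alpha tl th : R) (r q u : R -> R).
Hypothesis HQ : inverse_demand Q.
Hypothesis Halpha : 0 <= alpha < 1.
Hypothesis HD : in_D Q c alpha tl th r q u.

Lemma served_surplus t : inTheta tl th t -> r t = 1 -> Vf Q (q t) - q t * Q (q t) >= c.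
Proof.
  intros Ht Hr. pose proof HD as [Hd Hu]. pose proof Hu as [[Hm [Hic _]] _].
  destruct (deterministic_cases tl th r q u t Hm Hd Ht) as [[_ Hx]|[Hr0 _]]; [|lra].
  apply Rnot_lt_ge. intros Hlt.
  destruct (TS_lottery_gain Q HQ c t (q t) Hx Hlt) as [y [Hy Hgain]].
  assert (Hrho : 0 < q t / y < 1).
  { split; [apply Rdiv_lt_0_compat; lra|].
    apply Rmult_lt_reg_r with y; [lra|]. field_simplify; lra. }
  assert (Hrow : forall t', inTheta tl th t' -> u t' >= u t + (t - t') * y * (q t / y)).
  { intros t' Ht'. pose proof (Hic t' t Ht' Ht). rewrite Hr in H.
    replace ((t - t') * y * (q t / y)) with ((t - t') * q t * 1) by (field; lra). lra. }
  pose proof (undominated_update tl th Q c alpha r q u t (q t / y) y Hu Ht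
    ltac:(lra) ltac:(lra) ltac:(split; intros; lra) Hrow).
  rewrite Hr in H. lra.
Qed.

Lemma served_price t0 : inTheta tl th t0 -> r t0 = 1 -> Q (q t0) >= t0.
Proof.
  intros Ht0 Hr0. pose proof HD as [Hd Hu]. pose proof Hu as [[Hm [Hic Hir]] _].
  destruct (deterministic_cases tl th r q u t0 Hm Hd Ht0) as [[_ Hx]|[H _]]; [|lra].
  apply Rnot_lt_ge. intros Hlt.
  destruct (inverse_demand_lt_left Q HQ (q t0) t0 Hx Hlt) as [z [Hz HQz]].
  (* cap the quantity of every type above [t0] at [z], charging the least rent *)
  set (q2 := cap_above t0 z q). set (Y := cap_above t0 z (fun t => q t * r t)).
  destruct (deterministic_cap tl th r q u t0 z Hm Hd ltac:(lra)) as [Hm2 HqY].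
  pose proof (admissible_alloc_cap tl th t0 z _ ltac:(lra) (alloc_admissible tl th r q u Hm Hic))
    as HY.
  assert (Hu2 : forall t, inTheta tl th t -> rent th Y (u th) t <= u t).
  { intros t Ht. pose proof (rent_le_IC tl th Y HY r q u (u th) t Hic
      ltac:(intros x Hx'; unfold Y, cap_above; destruct Rle_dec; [apply Rmin_l|lra]) Ht). lra. }
  assert (HTS : forall t, inTheta tl th t -> r t = 1 -> TS Q c t (q2 t) >= TS Q c t (q t)).
  { intros t Ht Hr. unfold q2, cap_above. destruct (Rle_dec t0 t); [|lra].
    unfold Rmin. destruct (Rle_dec (q t) z); [lra|].
    left. apply TS_decreasing; auto; lra. }
  pose proof (undominated_no_gain tl th Q c alpha r q u r q2 _ Hu
    (feasible_rent tl th Y HY r q2 u (u th) Hm2 HqY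
      ltac:(apply Rge_le, Hir; unfold inTheta in *; lra))) as Hng.
  assert (HRS : forall t, inTheta tl th t ->
    RS Q c alpha t r q2 (rent th Y (u th)) >= RS Q c alpha t r q u).
  { intros t Ht. unfold RS. pose proof (Hu2 t Ht).
    destruct (deterministic_cases tl th r q u t Hm Hd Ht) as [[Hr _]|[Hr _]]; rewrite Hr;
      [pose proof (HTS t Ht Hr)|]; nra. }
  specialize (Hng HRS t0 Ht0). unfold RS in Hng. rewrite Hr0 in Hng. pose proof (Hu2 t0 Ht0).
  assert (TS Q c t0 (q2 t0) > TS Q c t0 (q t0)).
  { unfold q2, cap_above. destruct (Rle_dec t0 t0); [|lra]. rewrite Rmin_right by lra.
    apply TS_decreasing; auto; lra. }
  nra.
Qed.

Lemma lowest_type_served q0 : 0 < tl < th -> A2 Q c tl th -> 0 <= q0 -> Q q0 = tl ->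
  r tl = 1 /\ q tl = q0.
Proof.
  intros Hth HA Hq0 HQ0.
  destruct (A2_lowest_type Q HQ c tl th q0 Hth HA Hq0 HQ0) as [Hq0p HT0].
  pose proof HD as [Hd Hu]. pose proof Hu as [[Hm [Hic _]] _].
  assert (Htl : inTheta tl th tl) by (split; lra).
  assert (HXle : q tl * r tl <= q0).
  { destruct (deterministic_cases tl th r q u tl Hm Hd Htl) as [[Hr _]|[-> ->]]; [|lra].
    pose proof (served_price tl Htl Hr). rewrite Hr, Rmult_1_r.
    apply Rnot_lt_le. intros Hlt. pose proof (inverse_demand_decr Q HQ q0 (q tl) Hq0 Hlt). lra. }
  assert (Hrow : forall t, inTheta tl th t -> u t >= u tl + (tl - t) * q0 * 1).
  { intros t Ht. pose proof (Hic t tl Ht Htl). destruct Ht.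
    assert ((tl - t) * q0 <= (tl - t) * (q tl * r tl)) by (apply Rmult_le_compat_neg_l; lra).
    lra. }
  pose proof (undominated_update tl th Q c alpha r q u tl 1 q0 Hu Htl
    ltac:(lra) Hq0 ltac:(split; intros; lra) Hrow) as Hopt.
  destruct (deterministic_cases tl th r q u tl Hm Hd Htl) as [[Hr Hq]|[Hr _]]; rewrite Hr in *;
    [|lra].
  split; auto. destruct (Req_dec (q tl) q0) as [|Hne]; auto.
  pose proof (TS_increasing Q HQ c tl (q tl) q0 ltac:(lra) ltac:(lra)). lra.
Qed.

(* Otherwise serving [L] at [ts] would be IC and raise the surplus at [ts]. *)
Lemma alloc_ge_left_inf ts L : A2 Q c tl th -> tl < ts <= th ->
  (forall t, tl <= t < ts -> L <= q t * r t) ->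
  (forall d, 0 < d -> exists t, tl <= t < ts /\ q t * r t < L + d) ->
  L <= q ts * r ts.
Proof.
  intros HA Hts Hlb Happrox. pose proof HD as [Hd Hu]. pose proof Hu as [[Hm [Hic _]] _].
  assert (Hts' : inTheta tl th ts) by (split; lra).
  apply Rnot_lt_le. intros Hlt.
  pose proof (alloc_nonneg tl th r q u ts Hm Hts').
  assert (Hserved : forall t, tl <= t < ts -> r t = 1 /\ q t * r t = q t).
  { intros t Ht. pose proof (Hlb t Ht).
    destruct (deterministic_cases tl th r q u t Hm Hd ltac:(split; lra)) as [[Hr _]|[_ Hq]].
    - rewrite Hr. split; [reflexivity|ring].
    - rewrite Hq in *. lra. }
  assert (HQL : Q L >= ts).
  { apply Rnot_lt_ge. intros HQlt. set (t := Rmax tl ((Q L + ts) / 2)).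
    assert (Ht : tl <= t < ts) by (split; [apply Rmax_l|apply Rmax_lub_lt; lra]).
    destruct (Hserved t Ht) as [Hr Hx]. pose proof (Hlb t Ht).
    pose proof (served_price t ltac:(split; lra) Hr).
    pose proof (inverse_demand_noninc Q HQ L (q t) ltac:(lra) ltac:(lra)).
    pose proof (Rmax_r tl ((Q L + ts) / 2)). fold t in H3. lra. }
  assert (Hcs : Vf Q L - L * Q L >= c).
  { apply surplus_ge_limit; [exact HQ|lra|]. intros d Hd0.
    destruct (Happrox d Hd0) as [t [Ht Hxt]]. destruct (Hserved t Ht) as [Hr Hx].
    pose proof (Hlb t Ht). exists (q t). split; [lra|].
    apply served_surplus; auto. split; lra. }
  assert (Hgain : TS Q c ts L > r ts * TS Q c ts (q ts)).
  { destruct (deterministic_cases tl th r q u ts Hm Hd Hts') as [[Hr Hq]|[Hr _]]; rewrite Hr.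
    - rewrite Rmult_1_l. rewrite Hr in Hlt. apply TS_increasing; auto; lra.
    - rewrite Rmult_0_l. apply (TS_pos_served Q HQ c tl th); auto; lra. }
  pose proof (undominated_update tl th Q c alpha r q u ts 1 L Hu Hts' ltac:(lra) ltac:(lra)
    ltac:(split; intros; lra)
    ltac:(intros t Ht; rewrite Rmult_1_r;
          exact (IC_raise_to_inf tl th r q u ts L Hm Hic Hts' ltac:(lra) ltac:(lra) Hlb t Ht))).
  lra.
Qed.

End UndominatedDeterministic.

Section DominationUnderP.

Variables (tl th c alpha : R) (P Pn : R -> R) (q0 : R) (r q u r' q' u' : R -> R).
Hypothesis Htl : 0 < tl.
Hypothesis Hth : tl < th.
Hypothesis Halpha : 0 <= alpha < 1.
Hypothesis HP : inverse_demand P.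
Hypothesis HPn : inverse_demand Pn.
Hypothesis HA2n : A2 Pn c tl th.
Hypothesis Hgap : forall x y, 0 <= y -> y < x -> P x - Pn x < P y - Pn y.
Hypothesis Hq0 : 0 <= q0.
Hypothesis HPq0 : P q0 = tl.
Hypothesis HPnq0 : Pn q0 = tl.
Hypothesis HD : in_D Pn c alpha tl th r q u.
Hypothesis Hf' : feasible tl th r' q' u'.
Hypothesis Hge : forall t, inTheta tl th t -> RS P c alpha t r' q' u' >= RS P c alpha t r q u.

Lemma gap_ex_RInt a b : 0 <= a -> 0 <= b -> ex_RInt (fun x => P x - Pn x) a b.
Proof.
  intros Ha Hb.
  apply (ex_RInt_minus (V := R_NormedModule)); apply inverse_demand_ex_RInt; auto.
Qed.

Lemma gap_noninc x y : 0 <= x -> x <= y -> P y - Pn y <= P x - Pn x.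
Proof. intros Hx [Hxy|<-]; [left; apply Hgap; auto|lra]. Qed.

Lemma TS_gap t y : 0 <= y -> TS P c t y - TS Pn c t y = RInt (fun x => P x - Pn x) 0 y.
Proof.
  intros Hy. destruct (Req_dec y 0) as [->|Hne].
  - rewrite !TS_0, RInt_point. unfold zero; simpl; ring.
  - rewrite !TS_nonzero by auto. unfold Vf.
    pose proof (RInt_minus (V := R_CompleteNormedModule) P Pn 0 y
      ltac:(apply inverse_demand_ex_RInt; auto; lra)
      ltac:(apply inverse_demand_ex_RInt; auto; lra)) as E.
    simpl in E. unfold minus, plus, opp in E. simpl in E.
    transitivity (RInt P 0 y + - RInt Pn 0 y); [ring|]. rewrite <- E. reflexivity.
Qed.

(* Since [P - Pn] is decreasing and vanishes at [q0], the conditions forced on served types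
   by undominatedness under [Pn] carry over to [P]. *)
Lemma served_conditions_P t : inTheta tl th t -> r t = 1 ->
  0 < q t <= q0 /\ P (q t) >= t /\ Vf P (q t) - q t * P (q t) >= c.
Proof.
  intros Ht Hr. pose proof HD as [Hd [[Hm _] _]].
  destruct (deterministic_cases tl th r q u t Hm Hd Ht) as [[_ Hq]|[Hr0 _]]; [|lra].
  pose proof (served_price Pn c alpha tl th r q u HPn Halpha HD t Ht Hr) as Hprice.
  pose proof (served_surplus Pn c alpha tl th r q u HPn HD t Ht Hr) as Hcs.
  assert (Hle : q t <= q0).
  { apply Rnot_lt_le. intros Hlt. pose proof (inverse_demand_decr Pn HPn q0 (q t) Hq0 Hlt).
    destruct Ht. lra. }
  pose proof (gap_noninc (q t) q0 ltac:(lra) Hle) as Hgq.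
  pose proof (TS_gap t (q t) ltac:(lra)) as E.
  pose proof (RInt_noninc_bounds _ gap_ex_RInt gap_noninc 0 (q t) ltac:(lra)) as [B _].
  rewrite !TS_nonzero in E by lra.
  repeat split; try lra; nra.
Qed.

(* [M] maximizes [P]-surplus among lotteries of no larger expected quantity, so [M'] can only
   gain at such types through the rent. *)
Lemma RS_gain_le_rent t : inTheta tl th t -> (q' t * r' t <= q t * r t \/ t = tl) ->
  RS P c alpha t r' q' u' - RS P c alpha t r q u <= (1 - alpha) * (u t - u' t).
Proof.
  intros Ht Hor. pose proof HD as [Hd [[Hm _] _]]. destruct Hf' as [Hm' _].
  destruct (lowest_type_served Pn c alpha tl th r q u HPn Halpha HD q0 (conj Htl Hth) HA2n Hq0
    HPnq0) as [Hrl Hql].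
  assert (r' t * TS P c t (q' t) <= r t * TS P c t (q t)); [|unfold RS; lra].
  destruct (Hm' t Ht) as [Hr' [Hq' Hiff']].
  destruct (deterministic_cases tl th r q u t Hm Hd Ht) as [[Hr Hq]|[Hr Hq]]; rewrite Hr.
  - destruct (served_conditions_P t Ht Hr) as [Hqq [HPq HCS]]. rewrite Rmult_1_l.
    apply TS_served_optimal; auto; try lra.
    destruct Hor as [Hor| ->]; [left; rewrite Hr in Hor; lra|right; rewrite Hql; lra].
  - destruct Hor as [Hor| ->]; [|lra]. rewrite Hr, Hq in Hor.
    assert (Hx' : q' t * r' t = 0) by nra.
    destruct (Rmult_integral _ _ Hx') as [E|E]; [apply Hiff' in E|]; rewrite E; lra.
Qed.

Lemma rent_le_at t : inTheta tl th t -> (q' t * r' t <= q t * r t \/ t = tl) -> u' t <= u t.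
Proof. intros Ht Hor. pose proof (RS_gain_le_rent t Ht Hor). pose proof (Hge t Ht). nra. Qed.

(* Where [u' > u], [M'] allocates more than [M], so by the two IC constraints [u' - u] can
   grow along a grid of mesh [h] by at most [h] times the decrease of [M]'s allocation. *)
Lemma rent_gap_le_mesh t N : inTheta tl th t -> (0 < N)%nat ->
  u' t - u t <= (t - tl) / INR N * (q tl * r tl).
Proof.
  intros Ht HN. pose proof HD as [_ [[Hm [Hic _]] _]]. destruct Hf' as [_ [Hic' _]].
  pose proof (lt_0_INR N HN). destruct Ht as [Ht1 Ht2].
  set (h := (t - tl) / INR N).
  assert (Hh : 0 <= h) by (unfold h; apply Rdiv_le_0_compat; lra).
  set (tj := fun j : nat => tl + INR j * h).
  assert (Htj : forall j, (j <= N)%nat -> inTheta tl th (tj j)).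
  { intros j Hj. apply le_INR in Hj. pose proof (pos_INR j).
    assert (INR N * h = t - tl) by (unfold h; field; lra).
    assert (INR j * h <= INR N * h) by (apply Rmult_le_compat_r; lra).
    unfold tj; split; nra. }
  assert (Htl' : inTheta tl th tl) by (split; lra).
  pose proof (stepwise_bound (fun j => u' (tj j) - u (tj j)) (fun j => q (tj j) * r (tj j)) h N Hh)
    as Hstep.
  assert (Ht0 : tj 0%nat = tl) by (unfold tj; simpl; ring).
  assert (HtN : tj N = t) by (unfold tj, h; field; lra).
  simpl in Hstep. rewrite Ht0 in Hstep.
  specialize (Hstep ltac:(pose proof (rent_le_at tl Htl' (or_intror eq_refl)); lra)).
  specialize (Hstep ltac:(intros j Hj; destruct (Htj j Hj);
    apply (IC_alloc_noninc tl th r q u tl (tj j) Hic); lra)).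
  assert (Hinc : forall j, (j < N)%nat -> 0 < u' (tj (S j)) - u (tj (S j)) ->
    u' (tj (S j)) - u (tj (S j)) <=
    u' (tj j) - u (tj j) + h * (q (tj j) * r (tj j) - q (tj (S j)) * r (tj (S j)))).
  { intros j Hj Hpos.
    assert (HS : tj (S j) = tj j + h) by (unfold tj; rewrite S_INR; ring).
    pose proof (Htj j ltac:(lia)) as Hj1. pose proof (Htj (S j) ltac:(lia)) as Hj2.
    assert (Hmore : q (tj (S j)) * r (tj (S j)) < q' (tj (S j)) * r' (tj (S j))).
    { apply Rnot_le_lt. intros Hle. pose proof (rent_le_at _ Hj2 (or_introl Hle)). lra. }
    pose proof (IC_diff tl th r' q' u' (tj j) (tj (S j)) Hic' Hj1 Hj2).
    pose proof (IC_diff tl th r q u (tj (S j)) (tj j) Hic Hj2 Hj1).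
    rewrite HS in *. nra. }
  specialize (Hstep Hinc N (le_n N)). rewrite HtN in Hstep.
  pose proof (alloc_nonneg tl th r q u t Hm ltac:(split; lra)). nra.
Qed.

Lemma rent_le t : inTheta tl th t -> u' t <= u t.
Proof.
  intros Ht. pose proof HD as [_ [[Hm _] _]].
  assert (Htl' : inTheta tl th tl) by (split; lra).
  pose proof (alloc_nonneg tl th r q u tl Hm Htl'). destruct Ht as [Ht1 Ht2].
  assert (u' t - u t <= 0); [|lra].
  apply (le_0_of_le_div_INR _ ((t - tl) * (q tl * r tl))); [nra|].
  intros N HN. pose proof (rent_gap_le_mesh t N ltac:(split; lra) HN).
  pose proof (lt_0_INR N HN).
  replace ((t - tl) * (q tl * r tl) / INR N) with ((t - tl) / INR N * (q tl * r tl))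
    by (field; lra). lra.
Qed.

Definition r_min (t : R) : R := if Rlt_dec (q' t * r' t) (q t * r t) then r' t else r t.
Definition q_min (t : R) : R := if Rlt_dec (q' t * r' t) (q t * r t) then q' t else q t.
Definition alloc_min (t : R) : R := Rmin (q t * r t) (q' t * r' t).
Definition u_min : R -> R := rent th alloc_min (u' th).

Lemma alloc_min_admissible : admissible_alloc tl th alloc_min.
Proof.
  pose proof HD as [_ [[Hm [Hic _]] _]]. destruct Hf' as [Hm' [Hic' _]].
  exact (admissible_alloc_min tl th _ _ (alloc_admissible tl th r q u Hm Hic)
    (alloc_admissible tl th r' q' u' Hm' Hic')).
Qed.

Lemma feasible_min : feasible tl th r_min q_min u_min.
Proof.
  pose proof HD as [_ [[Hm _] _]]. destruct Hf' as [Hm' [_ Hir']].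
  apply (feasible_rent tl th _ alloc_min_admissible r_min q_min u').
  - intros t Ht. unfold r_min, q_min. destruct Rlt_dec; [apply Hm'|apply Hm]; auto.
  - intros t Ht. unfold r_min, q_min, alloc_min.
    destruct Rlt_dec; [rewrite Rmin_right|rewrite Rmin_left]; lra.
  - apply Rge_le, Hir'. split; lra.
Qed.

Lemma u_min_le' t : inTheta tl th t -> u_min t <= u' t.
Proof.
  intros Ht. destruct Hf' as [_ [Hic' _]].
  pose proof (rent_le_IC tl th _ alloc_min_admissible r' q' u' (u' th) t Hic'
    ltac:(intros x _; apply Rmin_r) Ht). unfold u_min. lra.
Qed.

Lemma u_min_le t : inTheta tl th t -> u_min t <= u t.
Proof.
  intros Ht. pose proof HD as [_ [[_ [Hic _]] _]].
  pose proof (rent_le_IC tl th _ alloc_min_admissible r q u (u' th) t Hic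
    ltac:(intros x _; apply Rmin_l) Ht).
  pose proof (rent_le th ltac:(split; lra)). unfold u_min. lra.
Qed.

(* Where [M'] allocates less, moving from [P] to [Pn] costs [M'] at most what it costs [M]:
   both lose [RInt (P - Pn)] over the quantity sold, and this integral is concave. *)
Lemma RS_min_gain t : inTheta tl th t -> q' t * r' t < q t * r t ->
  RS Pn c alpha t r_min q_min u_min - RS Pn c alpha t r q u >=
  RS P c alpha t r' q' u' - RS P c alpha t r q u.
Proof.
  intros Ht Hlt. pose proof HD as [Hd [[Hm _] _]]. destruct Hf' as [Hm' _].
  unfold RS, r_min, q_min. destruct Rlt_dec; [|lra].
  destruct (Hm' t Ht) as [Hr' [Hq' _]].
  destruct (deterministic_cases tl th r q u t Hm Hd Ht) as [[Hr Hq]|[Hr Hq]].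
  2:{ pose proof (alloc_nonneg tl th r' q' u' t Hm' Ht). rewrite Hr, Hq in Hlt. lra. }
  rewrite Hr in *. destruct (served_conditions_P t Ht Hr) as [Hqq _].
  pose proof (TS_gap t (q' t) Hq'). pose proof (TS_gap t (q t) ltac:(lra)).
  pose proof (RInt_0_scale_le _ gap_ex_RInt gap_noninc (q t) (q' t) (r' t) ltac:(lra)
    ltac:(pose proof (gap_noninc (q t) q0 ltac:(lra) (proj2 Hqq)); lra) Hr' Hq' ltac:(lra)).
  pose proof (u_min_le' t Ht).
  assert ((1 - alpha) * u_min t <= (1 - alpha) * u' t) by (apply Rmult_le_compat_l; lra).
  assert (r' t * TS P c t (q' t) - r' t * TS Pn c t (q' t) =
          r' t * RInt (fun x => P x - Pn x) 0 (q' t)).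
  { rewrite <- Rmult_minus_distr_l. f_equal. lra. }
  lra.
Qed.

Lemma RS_min_ge t : inTheta tl th t ->
  RS Pn c alpha t r_min q_min u_min >= RS Pn c alpha t r q u.
Proof.
  intros Ht. destruct (Rlt_dec (q' t * r' t) (q t * r t)) as [Hlt|Hnlt].
  - pose proof (RS_min_gain t Ht Hlt). pose proof (Hge t Ht). lra.
  - pose proof (u_min_le t Ht). unfold RS, r_min, q_min.
    destruct Rlt_dec; [contradiction|]. nra.
Qed.

Lemma RS_le_of_less t : inTheta tl th t -> q' t * r' t < q t * r t \/ u' t < u t ->
  RS P c alpha t r' q' u' <= RS P c alpha t r q u.
Proof.
  intros Ht Hless. pose proof HD as [_ Hu].
  pose proof (undominated_no_gain tl th Pn c alpha r q u _ _ _ Hu feasible_min RS_min_ge t Ht)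
    as Hng.
  destruct (Rlt_dec (q' t * r' t) (q t * r t)) as [Hlt|Hnlt].
  - pose proof (RS_min_gain t Ht Hlt). lra.
  - destruct Hless as [|Hult]; [contradiction|].
    pose proof (u_min_le' t Ht). unfold RS, r_min, q_min in Hng.
    destruct Rlt_dec in Hng; [contradiction|]. nra.
Qed.

Lemma RS_le_of_more ts : inTheta tl th ts -> q ts * r ts <= q' ts * r' ts -> u ts <= u' ts ->
  RS P c alpha ts r' q' u' <= RS P c alpha ts r q u.
Proof.
  intros Hts HXle Hule. apply Rnot_lt_le. intros Hstr.
  pose proof HD as [_ [[_ [Hic _]] _]]. destruct Hf' as [_ [Hic' _]].
  pose proof (rent_le ts Hts).
  assert (HXlt : q ts * r ts < q' ts * r' ts).
  { destruct HXle as [|E]; auto.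
    pose proof (RS_gain_le_rent ts Hts (or_introl (Req_le _ _ (eq_sym E)))). nra. }
  assert (Htsl : tl < ts).
  { destruct Hts as [[|E] Hts2]; auto. pose proof (RS_gain_le_rent ts (conj (Req_le _ _ E) Hts2)
      (or_intror (eq_sym E))). nra. }
  (* with equal rents at [ts], IC for both mechanisms squeezes [M']'s allocation at [ts] below
     [M]'s allocation to the left of [ts] *)
  assert (Hbelow : forall t, tl <= t < ts -> q' ts * r' ts <= q t * r t).
  { intros t Ht. assert (Hti : inTheta tl th t) by (destruct Hts; split; lra).
    pose proof (rent_le t Hti).
    pose proof (IC_diff tl th r' q' u' t ts Hic' Hti Hts).
    pose proof (IC_diff tl th r q u ts t Hic Hts Hti).
    apply Rmult_le_reg_l with (ts - t); lra. }
  destruct (exists_inf_on (fun t => q t * r t) tl ts (q' ts * r' ts) Htsl Hbelow)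
    as [L [HL1 [HL2 HL3]]].
  pose proof (alloc_ge_left_inf Pn c alpha tl th r q u HPn Halpha HD ts L HA2n
    ltac:(destruct Hts; split; lra) HL1 HL3).
  lra.
Qed.

Lemma RS_dominating_le ts : inTheta tl th ts -> RS P c alpha ts r' q' u' <= RS P c alpha ts r q u.
Proof.
  intros Hts.
  destruct (Rlt_or_le (q' ts * r' ts) (q ts * r ts)) as [HX|HX];
    [apply RS_le_of_less; auto|].
  destruct (Rlt_or_le (u' ts) (u ts)) as [Hu|Hu];
    [apply RS_le_of_less; auto|apply RS_le_of_more; auto].
Qed.

End DominationUnderP.

Theorem proposition5 (tl th c alpha : R) (P Pn : R -> R)
  (Htl : 0 < tl) (Hth : tl < th) (Hc : 0 < c) (Halpha : 0 <= alpha < 1)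
  (HP : inverse_demand P) (HPn : inverse_demand Pn)
  (HA2 : A2 P c tl th) (HA2n : A2 Pn c tl th)
  (Hdiff : forall q q', 0 <= q' -> q' < q -> P q - Pn q < P q' - Pn q')
  (Hlow : exists q, 0 <= q /\ P q = tl /\ Pn q = tl) :
  forall r q u : R -> R,
    in_D Pn c alpha tl th r q u -> in_D P c alpha tl th r q u.
Proof.
  intros r q u HD. destruct Hlow as [q0 [Hq0 [HPq0 HPnq0]]].
  pose proof HD as [Hd [Hf _]]. split; [exact Hd|]. split; [exact Hf|].
  intros [r' [q' [u' [Hf' [_ [Hge [ts [Hts Hstr]]]]]]]].
  pose proof (RS_dominating_le tl th c alpha P Pn q0 r q u r' q' u'
    Htl Hth Halpha HP HPn HA2n Hdiff Hq0 HPq0 HPnq0 HD Hf' Hge ts Hts).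
  lra.
Qed.
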